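(* Let $\mu>0$ and $\lambda_1>0$, and consider the system $$\frac{dx}{dt}=\lambda_1\bigl(2\mu y-4\mu xy-2x^2-2xy+x\bigr),\qquad \frac{dy}{dt}=\lambda_1\bigl(\mu y-4\mu y^2-2xy-2y^2+y\bigr).$$ Let $Q\subset\mathbb{R}^2$ be the closed quadrangle defined by $y\ge x/2$, $y\ge 1/2-x$, $y\le 1/3$, $y\le 1/2-x/2$. Then the fixed points of this system in $Q$ are given by $$x_c=\frac{2\mu+2}{4\mu+6}=\frac{\mu+1}{2\mu+3},\qquad y_c=\frac{\mu+1}{4\mu+6}.$$
   Context: $Q$ is the domain of convex mosaics in the inverse symbolic plane, with vertices $(1/3,1/6)$, $(1/2,1/4)$, $(1/3,1/3)$, $(1/6,1/3)$. *)

From Stdlib Require Import Reals Lra.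
Open Scope R_scope.

Definition field_x (mu lam1 x y : R) : R :=
  lam1 * (2 * mu * y - 4 * mu * x * y - 2 * x ^ 2 - 2 * x * y + x).
Definition field_y (mu lam1 x y : R) : R :=
  lam1 * (mu * y - 4 * mu * y ^ 2 - 2 * x * y - 2 * y ^ 2 + y).

Definition in_Q (x y : R) : Prop :=
  y >= x / 2 /\ y >= 1 / 2 - x /\ y <= 1 / 3 /\ y <= 1 / 2 - x / 2.

Definition is_fixed_point (mu lam1 x y : R) : Prop :=
  field_x mu lam1 x y = 0 /\ field_y mu lam1 x y = 0.

From Stdlib Require Import Reals Lra.
Open Scope R_scope.

(* Both components of the field share the factor
   [nullcline mu x y = mu + 1 - 4 mu y - 2 x - 2 y]:
   [field_y = lam1 y nullcline] and [field_x = lam1 (x nullcline + mu (2 y - x))].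
   On Q we have [y > 0], so a fixed point must lie on the nullcline and on the
   line [x = 2 y]; their intersection is the stated point. *)

Definition nullcline (mu x y : R) : R := mu + 1 - 4 * mu * y - 2 * x - 2 * y.

Lemma field_y_factor (mu lam1 x y : R) :
  field_y mu lam1 x y = lam1 * y * nullcline mu x y.
Proof. unfold field_y, nullcline. ring. Qed.

Lemma field_x_factor (mu lam1 x y : R) :
  field_x mu lam1 x y = lam1 * (x * nullcline mu x y + mu * (2 * y - x)).
Proof. unfold field_x, nullcline. ring. Qed.

Lemma in_Q_y_pos (x y : R) : in_Q x y -> 0 < y.
Proof. intros [h1 [h2 _]]. lra. Qed.

Lemma is_fixed_point_iff (mu lam1 x y : R) :
  mu <> 0 -> lam1 <> 0 -> y <> 0 ->
  is_fixed_point mu lam1 x y <-> x = 2 * y /\ nullcline mu x y = 0.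
Proof.
  intros hmu hlam hy.
  unfold is_fixed_point. rewrite field_x_factor, field_y_factor.
  split.
  - intros [Fx Fy].
    assert (hN : nullcline mu x y = 0).
    { apply Rmult_integral in Fy as [Fy | hN]; [|exact hN].
      apply Rmult_integral in Fy as [|]; contradiction. }
    rewrite hN in Fx.
    apply Rmult_integral in Fx as [|Fx]; [contradiction|].
    assert (hline : mu * (2 * y - x) = 0) by lra.
    apply Rmult_integral in hline as [|]; [contradiction|].
    split; lra.
  - intros [hx hN]. rewrite hN, hx. split; ring.
Qed.

Lemma nullcline_on_diagonal_iff (mu x y : R) :
  4 * mu + 6 <> 0 ->
  x = 2 * y /\ nullcline mu x y = 0 <->
  x = (2 * mu + 2) / (4 * mu + 6) /\ y = (mu + 1) / (4 * mu + 6).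
Proof.
  intros hd. unfold nullcline.
  split.
  - intros [-> hN].
    assert (hy : y = (mu + 1) / (4 * mu + 6)).
    { apply (Rmult_eq_reg_r (4 * mu + 6)); [|exact hd].
      field_simplify; [lra | exact hd]. }
    split; [rewrite hy; field | ]; assumption.
  - intros [-> ->]. split; field; exact hd.
Qed.

Theorem lemma5 (mu lam1 : R) (hmu : 0 < mu) (hlam : 0 < lam1) :
  forall x y : R, in_Q x y ->
    (is_fixed_point mu lam1 x y <->
     (x = (2 * mu + 2) / (4 * mu + 6) /\ y = (mu + 1) / (4 * mu + 6))).
Proof.
  intros x y hQ.
  pose proof (in_Q_y_pos x y hQ) as hy.
  rewrite is_fixed_point_iff by lra.
  apply nullcline_on_diagonal_iff. lra.
Qed.
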